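(* Let $G$ be a finite simple graph with edge weight function $w$ and vertex weight function $w_1$, let $u\in V(G)$ and let $\theta$ be a real number. Then $$\mathrm{mult}(\theta,G)-1\le \mathrm{mult}(\theta,G\setminus u)\le \mathrm{mult}(\theta,G)+1.$$
   Context: An edge weight function $w$ assigns a nonzero complex number to each edge; a vertex weight function $w_1$ assigns a real number (possibly $0$) to each vertex; subgraphs carry restricted weights; $G\setminus u$ deletes $u$ and its incident edges. For $A\subseteq E(G)$, $w(A)=\prod_{e\in A}w(e)$. $\mu_w(G,x)=\sum_{M}(-1)^{|M|}|w(M)|^2x^{n-2|M|}$ over all matchings $M$ (including empty). $\eta_{(w,w_1)}(G,x)=\sum_{S\subseteq V(G)}(-1)^{|V(G)\setminus S|}\big(\prod_{v\in V(G)\setminus S}w_1(v)\big)\mu_w(G[S],x)$ with $G[S]$ the induced subgraph; $\mu_w,\eta_{(w,w_1)}$ of the empty graph equal $1$. $\mathrm{mult}(\theta,H)$ is the multiplicity of $\theta$ as a root of $\eta_{(w,w_1)}(H,x)$ ($0$ if not a root). *)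

From HB Require Import structures.
From mathcomp Require Import all_boot all_order all_algebra.
From mathcomp Require Import reals.
From mathcomp Require Import complex.
Set Implicit Arguments. Unset Strict Implicit. Unset Printing Implicit Defensive.
Import Order.TTheory GRing.Theory Num.Theory.
Local Open Scope ring_scope.

Section WeightedGraphs.
Variables (R : realType) (V : finType).
Definition simple_graph (E : {set {set V}}) : Prop :=
  forall e, e \in E -> #|e| = 2%N.

(* M is a matching of the induced subgraph G[S]: a set of edges of E
   contained in S, pairwise disjoint. *)
Definition matching_in (E : {set {set V}}) (S : {set V}) (M : {set {set V}}) :=
  [&& M \subset E, [forall e in M, e \subset S] & trivIset M].

Definition mu_w (E : {set {set V}}) (w : {set V} -> R[i]) (S : {set V})
  : {poly R[i]} :=
  \sum_(M : {set {set V}} | matching_in E S M)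
     ((-1) ^+ #|M| * \prod_(e in M) (`|w e| ^+ 2)) *: 'X^(#|S| - 2 * #|M|).

Definition eta_w (E : {set {set V}}) (w : {set V} -> R[i]) (w1 : V -> R)
  (S : {set V}) : {poly R[i]} :=
  \sum_(T : {set V} | T \subset S)
     ((-1) ^+ #|S :\: T| * \prod_(v in S :\: T) ((w1 v)%:C)%C) *: mu_w E w T.

Definition mult (E : {set {set V}}) (w : {set V} -> R[i]) (w1 : V -> R)
  (theta : R) (S : {set V}) : nat :=
  mup ((theta%:C)%C) (eta_w E w w1 S).
End WeightedGraphs.

From HB Require Import structures.
From mathcomp Require Import all_boot all_order all_algebra.
From mathcomp Require Import reals.
From mathcomp Require Import complex.
From mathcomp Require Import zify ring.
Set Implicit Arguments. Unset Strict Implicit. Unset Printing Implicit Defensive.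
Import Order.TTheory GRing.Theory Num.Theory.
Local Open Scope ring_scope.

(* Write P S for eta of G[S]; only |w e|^2 enters, so P S is a real
   polynomial.  Splitting matchings and vertex subsets according to whether
   they touch a vertex u gives the recurrence
     P (u + S) = (x - w1 u) P S - sum_(v ~ u) |w uv|^2 P (S - v),
   hence P S is monic.  Substituting the recurrence into the Wronskian
   W = P (S - u) P S' - P S P (S - u)' shows, by induction on |S|, that W is
   P (S - u)^2 plus a nonnegative combination of squares.  If theta had
   multiplicity m >= k + 2 in P S, with k its multiplicity in P (S - u), then
   (x - theta)^(2k+1) would divide W; since a real root of a nonnegative
   combination of squares is a root of each square, (x - theta)^(k+1) would
   divide P (S - u).  The other inequality follows by applying this bound to
   every P (S - u - v) in the recurrence. *)

Section BigSubsets.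
Variables (T : finType) (R : Type) (idx : R) (op : Monoid.com_law idx).

Lemma big_subset_memE (S : {set T}) v (F : {set T} -> R) : v \in S ->
  \big[op/idx]_(A : {set T} | (A \subset S) && (v \in A)) F A
    = \big[op/idx]_(A : {set T} | A \subset S :\ v) F (v |: A).
Proof.
move=> vS.
rewrite (reindex_onto (fun A : {set T} => v |: A) (fun A => A :\ v)) /=; last first.
  by move=> A /andP[_ vA]; rewrite setD1K.
apply: eq_bigl => A; rewrite setU11 andbT subUset sub1set vS subsetD1.
congr (_ && _); apply/eqP/idP => [<-|vA]; last exact: setU1K.
by rewrite setD11.
Qed.

Lemma big_subset_setD1 (S : {set T}) v (F : {set T} -> R) : v \in S ->
  \big[op/idx]_(A : {set T} | A \subset S) F A
    = op (\big[op/idx]_(A : {set T} | A \subset S :\ v) F A)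
         (\big[op/idx]_(A : {set T} | A \subset S :\ v) F (v |: A)).
Proof.
move=> vS; rewrite (bigID (fun A : {set T} => v \in A)) /= -big_subset_memE //.
rewrite Monoid.mulmC.
by congr (op _ _); apply: eq_bigl => A; rewrite subsetD1.
Qed.

End BigSubsets.

Section Matchings.
Variables (V : finType) (E : {set {set V}}).
Hypothesis simE : simple_graph E.

Lemma edge_setU1 u e : e \in E -> u \in e -> exists2 v, v != u & e = [set u; v].
Proof.
move=> /simE /eqP /cards2P [x [y [xy ->]]]; rewrite !inE => /orP[]/eqP->.
  by exists y; rewrite // eq_sym.
by exists x; rewrite // setUC.
Qed.

Lemma matching_card (S : {set V}) M : matching_in E S M -> (2 * #|M| <= #|S|)%N.
Proof.
case/and3P=> ME /forall_inP MS /eqP tri.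
have -> : (2 * #|M| = \sum_(e in M) #|e|)%N.
  rewrite (eq_bigr (fun _ => 2%N)); first by rewrite sum_nat_const mulnC.
  by move=> e eM; rewrite simE // (subsetP ME).
rewrite tri; apply: subset_leq_card; apply/bigcupsP => e eM; exact: MS.
Qed.

Lemma matching_in_subset (S T : {set V}) M :
  S \subset T -> matching_in E S M -> matching_in E T M.
Proof.
move=> ST /and3P[ME /forall_inP MS tri]; apply/and3P; split => //.
by apply/forall_inP => e eM; apply: subset_trans (MS e eM) ST.
Qed.

Lemma matching_in_edge_mem (S : {set V}) (M : {set {set V}}) u v :
  [set u; v] \in M -> matching_in E S M -> u \in S.
Proof.
move=> eM /and3P[_ /forall_inP /(_ _ eM) /subsetP /(_ u) + _]; apply.
by rewrite !inE eqxx.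
Qed.

Lemma matching_in0 M : matching_in E set0 M = (M == set0).
Proof.
apply/idP/eqP => [/and3P[ME /forall_inP MS _]|->].
  apply/setP => e; rewrite inE; apply/negP => eM.
  have := simE (subsetP ME e eM); have := MS e eM; rewrite subset0 => /eqP->.
  by rewrite cards0.
apply/and3P; split; rewrite ?sub0set //; first by apply/forall_inP => e; rewrite inE.
by apply/trivIsetP => ? ?; rewrite inE.
Qed.

Lemma matching_in_setU1_edge (T : {set V}) u v M :
  u \notin T -> v \in T -> [set u; v] \in E ->
  matching_in E (u |: T) ([set u; v] |: M) && ([set u; v] \notin M)
    = matching_in E (T :\ v) M.
Proof.
move=> uT vT eE; set e := [set u; v].
have ue : u \in e by rewrite !inE eqxx.
have ve : v \in e by rewrite !inE eqxx orbT.
apply/idP/idP.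
- case/andP=> /and3P[ME /forall_inP MS tri] eM.
  apply/and3P; split.
  + by apply: subset_trans ME; apply: subsetUr.
  + apply/forall_inP => f fM.
    have fM' : f \in e |: M by rewrite !inE fM orbT.
    have dis : [disjoint e & f].
      move/trivIsetP: tri; apply => //; first by rewrite !inE eqxx.
      by apply: contraNneq eM => ->.
    apply/subsetP => x xf; rewrite !inE.
    have := subsetP (MS f fM') x xf; rewrite !inE => /orP[/eqP xu|->].
      by move: xf; rewrite xu (disjointFr dis ue).
    by rewrite andbT; apply: contraTneq xf => ->; rewrite (disjointFr dis ve).
  + by apply: trivIsetS tri; apply: subsetUr.
- case/and3P=> ME /forall_inP MS tri.
  have eM : e \notin M.
    by apply/negP => /MS /subsetP /(_ v ve); rewrite !inE eqxx.
  rewrite eM andbT; apply/and3P; split.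
  + by rewrite subUset sub1set eE.
  + apply/forall_inP => f; rewrite !inE => /orP[/eqP->|fM].
      by rewrite subUset !sub1set !inE eqxx vT orbT.
    apply: subset_trans (MS f fM) _; apply/subsetP => x; rewrite !inE.
    by case/andP=> _ ->; rewrite orbT.
  + have M0 : set0 \notin M.
      by apply/negP => /(subsetP ME) /simE; rewrite cards0.
    case: (@trivIsetU1 _ e M _ tri M0) => // f fM.
    rewrite disjoints_subset; apply/subsetP => x; rewrite !inE => /orP[]/eqP->.
      by apply/negP => /(subsetP (MS f fM)); rewrite !inE (negbTE uT) andbF.
    by apply/negP => /(subsetP (MS f fM)); rewrite !inE eqxx.
Qed.

Lemma matching_in_setU1_cover (T : {set V}) u M :
  u \notin T -> matching_in E (u |: T) M -> ~~ matching_in E T M ->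
  exists v, forall v', (v' \in T) && ([set u; v'] \in M) = (v' == v).
Proof.
move=> uT /and3P[ME /forall_inP MS tri] nT.
have [f fM fT] : exists2 f, f \in M & ~~ (f \subset T).
  apply/exists_inP; apply: contraR nT; rewrite negb_exists_in => /forall_inP H.
  by apply/and3P; split => //; apply/forall_inP => f /H; rewrite negbK.
have uf : u \in f.
  apply: contraR fT => nuf; apply/subsetP => x xf.
  have := subsetP (MS f fM) x xf; rewrite !inE => /orP[/eqP xu|//].
  by move: nuf; rewrite -xu xf.
have [v vu ef] := edge_setU1 (subsetP ME f fM) uf.
have vT : v \in T.
  have := subsetP (MS f fM) v; rewrite ef !inE eqxx orbT => /(_ isT).
  by rewrite (negbTE vu).
exists v => v'; apply/idP/idP; last by move/eqP->; rewrite vT -ef fM.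
case/andP=> v'T e'M.
have : [set u; v'] == f.
  apply/negPn/negP => ne; move/trivIsetP: tri => /(_ _ _ e'M fM ne) dis.
  by move: uf; rewrite (disjointFr dis) // !inE eqxx.
rewrite ef => /eqP/setP/(_ v'); rewrite !inE eqxx orbT eq_sym => /esym/orP[]//.
by move/eqP=> vu'; move: uT; rewrite vu' v'T.
Qed.

End Matchings.

Section MatchingPoly.
Variables (R : comNzRingType) (V : finType) (E : {set {set V}}) (c : {set V} -> R).
Hypothesis simE : simple_graph E.

Definition matching_term (S : {set V}) (M : {set {set V}}) : {poly R} :=
  ((-1) ^+ #|M| * \prod_(e in M) c e) *: 'X^(#|S| - 2 * #|M|).

Definition matching_poly (S : {set V}) : {poly R} :=
  \sum_(M : {set {set V}} | matching_in E S M) matching_term S M.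

Lemma matching_poly0 : matching_poly set0 = 1.
Proof.
rewrite /matching_poly (big_pred1 set0) => [|M]; last exact: matching_in0.
by rewrite /matching_term !cards0 big_set0 mulr1 expr0 scale1r.
Qed.

Lemma matching_term_setU1 (T : {set V}) u M : u \notin T -> matching_in E T M ->
  matching_term (u |: T) M = 'X * matching_term T M.
Proof.
move=> uT HM; rewrite /matching_term -scalerAr -exprS cardsU1 uT /=.
by congr (_ *: 'X^_); have := matching_card simE HM; rewrite /=; lia.
Qed.

Lemma sum_matching_term_edge (T : {set V}) u v :
  u \notin T -> v \in T -> [set u; v] \in E ->
  \sum_(M | matching_in E (u |: T) M && ([set u; v] \in M)) matching_term (u |: T) M
    = - (c [set u; v] *: matching_poly (T :\ v)).
Proof.
move=> uT vT eE; set e := [set u; v].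
rewrite (reindex_onto (fun M' => e |: M') (fun M => M :\ e)) /=; last first.
  by move=> M /andP[_ eM]; rewrite setD1K.
under eq_bigl => M'.
  have -> : ((e |: M') :\ e == M') = (e \notin M').
    by apply/eqP/idP => [<-|]; [rewrite setD11 | exact: setU1K].
  rewrite setU11 andbT (matching_in_setU1_edge simE M' uT vT eE).
  over.
rewrite scaler_sumr -sumrN; apply: eq_bigr => M' HM.
have mc := matching_card simE HM.
rewrite -(matching_in_setU1_edge simE M' uT vT eE) in HM; case/andP: HM => _ eM'.
have := cardsD1 v T; rewrite vT /matching_term cardsU1 (negbTE uT) cardsU1 eM'.
rewrite big_setU1 //= exprS scalerA -scaleNr => cardT.
congr (_ *: 'X^_); first by rewrite mulN1r mulNr mulrCA.
by move: mc; rewrite cardT; lia.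
Qed.

Lemma matching_poly_setU1 (T : {set V}) u : u \notin T ->
  matching_poly (u |: T)
    = 'X * matching_poly T
      - \sum_(v in T | [set u; v] \in E) c [set u; v] *: matching_poly (T :\ v).
Proof.
move=> uT; rewrite /matching_poly (bigID (matching_in E T)) /=.
congr (_ + _).
  rewrite mulr_sumr; apply: eq_big => [M|M /andP[_]]; last exact: matching_term_setU1.
  by apply: andb_idl => /matching_in_subset; apply; apply: subsetUr.
rewrite -sumrN.
transitivity (\sum_(M | matching_in E (u |: T) M && ~~ matching_in E T M)
                \sum_(v in T | [set u; v] \in M) matching_term (u |: T) M).
  apply: eq_bigr => M /andP[HuT HT].
  have [v cover] := matching_in_setU1_cover simE uT HuT HT.
  by rewrite (big_pred1 v) // => v'; rewrite /= cover.
rewrite (exchange_big_dep (fun v => v \in T)) /=; last by move=> ? ? _ /andP[].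
rewrite (bigID (fun v => [set u; v] \in E)) /= [X in _ + X]big1 ?addr0; last first.
  move=> v /andP[vT nE]; apply: big_pred0 => M.
  apply/negP => /andP[/andP[/and3P[ME _ _] _] /andP[_ eM]].
  by move: nE; rewrite (subsetP ME _ eM).
apply: eq_bigr => v /andP[vT eE]; rewrite -sum_matching_term_edge //.
apply: eq_bigl => M; rewrite vT -andbA [X in _ && X]andb_idl // => eM.
exact: contra (matching_in_edge_mem eM) uT.
Qed.

End MatchingPoly.

Section EtaPoly.
Variables (R : comNzRingType) (V : finType) (E : {set {set V}}).
Variables (c : {set V} -> R) (a : V -> R).
Hypothesis simE : simple_graph E.

Definition eta_coef (D : {set V}) : R := (-1) ^+ #|D| * \prod_(v in D) a v.

Definition eta_poly (S : {set V}) : {poly R} :=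
  \sum_(T : {set V} | T \subset S) eta_coef (S :\: T) *: matching_poly E c T.

Lemma eta_coef_setU1 u (D : {set V}) :
  u \notin D -> eta_coef (u |: D) = - a u * eta_coef D.
Proof.
by move=> uD; rewrite /eta_coef cardsU1 big_setU1 //= uD add1n exprS; ring.
Qed.

Lemma eta_poly0 : eta_poly set0 = 1.
Proof.
rewrite /eta_poly (big_pred1 set0) => [|T]; last exact: subset0.
by rewrite matching_poly0 // setD0 /eta_coef cards0 big_set0 mulr1 scale1r.
Qed.

Lemma eta_poly_setU1 (S : {set V}) u : u \notin S ->
  eta_poly (u |: S)
    = ('X - (a u)%:P) * eta_poly S
      - \sum_(v in S | [set u; v] \in E) c [set u; v] *: eta_poly (S :\ v).
Proof.
move=> uS.
have uT (T : {set V}) : T \subset S -> u \notin T.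
  by move=> /subsetP sTS; exact: contra (sTS u) uS.
have eta_u : \sum_(T : {set V} | T \subset S)
      eta_coef ((u |: S) :\: T) *: matching_poly E c T
    = - (a u)%:P * eta_poly S.
  rewrite /eta_poly mulr_sumr; apply: eq_bigr => T /uT uT'.
  have -> : (u |: S) :\: T = u |: (S :\: T).
    by apply/setP => x; rewrite !inE; case: eqP => // ->; rewrite uT'.
  by rewrite eta_coef_setU1 ?inE ?(negbTE uS) ?andbF // -polyCN mul_polyC scalerA.
have eta_cover : \sum_(T : {set V} | T \subset S)
      eta_coef ((u |: S) :\: (u |: T)) *: matching_poly E c (u |: T)
    = 'X * eta_poly S
      - \sum_(T : {set V} | T \subset S) \sum_(v in T | [set u; v] \in E)
        eta_coef (S :\: T) *: (c [set u; v] *: matching_poly E c (T :\ v)).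
  rewrite /eta_poly mulr_sumr -sumrB; apply: eq_bigr => T /uT uT'.
  have -> : (u |: S) :\: (u |: T) = S :\: T.
    by apply/setP => x; rewrite !inE; case: eqP => // ->; rewrite (negbTE uS) andbF.
  by rewrite matching_poly_setU1 // scalerBr scaler_sumr scalerAr.
have eta_edges : \sum_(T : {set V} | T \subset S) \sum_(v in T | [set u; v] \in E)
      eta_coef (S :\: T) *: (c [set u; v] *: matching_poly E c (T :\ v))
    = \sum_(v in S | [set u; v] \in E) c [set u; v] *: eta_poly (S :\ v).
  rewrite (exchange_big_dep (fun v => (v \in S) && ([set u; v] \in E))) /=; last first.
    by move=> T v /subsetP sTS /andP[/sTS -> ->].
  apply: eq_bigr => v /andP[vS eE]; rewrite /eta_poly scaler_sumr.
  rewrite (eq_bigl (fun T : {set V} => (T \subset S) && (v \in T))); last first.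
    by move=> T; rewrite eE andbT.
  rewrite big_subset_memE //; apply: eq_bigr => B; rewrite subsetD1 => /andP[_ vB].
  by rewrite setU1K // setDDl scalerA mulrC -scalerA.
rewrite {1}/eta_poly (big_subset_setD1 _ _ (setU11 u S)) setU1K //=.
rewrite eta_u eta_cover eta_edges; ring.
Qed.

Lemma eta_poly_monic_size (S : {set V}) :
  eta_poly S \is monic /\ size (eta_poly S) = #|S|.+1.
Proof.
have [n] := ubnP #|S|; elim: n S => // n IH S; rewrite ltnS => leSn.
have [->|[u uS]] := set_0Vmem S; first by rewrite eta_poly0 monic1 size_poly1 cards0.
have cardS := cardsD1 u S; rewrite uS /= in cardS.
have [mon sz] := IH (S :\ u) ltac:(lia).
set Q := \sum_(v in S :\ u | [set u; v] \in E) c [set u; v] *: eta_poly (S :\ u :\ v).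
have eqS : eta_poly S = ('X - (a u)%:P) * eta_poly (S :\ u) - Q.
  by rewrite -{1}(setD1K uS) eta_poly_setU1 // setD11.
have szQ : (size Q <= #|S :\ u|)%N.
  apply: leq_trans (size_sum _ _ _) _; apply/bigmax_leqP => v /andP[vS _].
  apply: leq_trans (size_scale_leq _ _) _.
  have := cardsD1 v (S :\ u); rewrite vS /= => cardSu.
  by have [_ ->] := IH (S :\ u :\ v) ltac:(lia); rewrite cardSu.
have szP : size (('X - (a u)%:P) * eta_poly (S :\ u)) = #|S|.+1.
  by rewrite size_monicM ?monicXsubC ?monic_neq0 // size_XsubC sz cardS.
have szQP : (size (- Q) < size ((('X - (a u)%:P) * eta_poly (S :\ u))%R))%N.
  by rewrite size_polyN szP ltnS (leq_trans szQ) // cardS leq_addl.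
rewrite eqS monicE lead_coefDl // size_polyDl // szP -monicE monicMl //.
exact: monicXsubC.
Qed.

End EtaPoly.

Section SumsOfSquares.
Variable R : realFieldType.

Definition sos (F : {poly R}) := exists s : seq (R * {poly R}),
  all (fun p => 0 <= p.1) s /\ F = \sum_(p <- s) p.1 *: p.2 ^+ 2.

Lemma sos0 : sos 0.
Proof. by exists [::]; rewrite big_nil. Qed.

Lemma sosD F G : sos F -> sos G -> sos (F + G).
Proof.
move=> [s [hs ->]] [t [ht ->]]; exists (s ++ t).
by rewrite all_cat hs ht big_cat.
Qed.

Lemma sosZ k F : 0 <= k -> sos F -> sos (k *: F).
Proof.
move=> k0 [s [hs ->]]; exists [seq (k * p.1, p.2) | p <- s]; split.
  by rewrite all_map; apply/allP => p ps /=; rewrite mulr_ge0 // (allP hs).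
by rewrite big_map scaler_sumr; apply: eq_bigr => p _; rewrite scalerA.
Qed.

Lemma sos_sqr f : sos (f ^+ 2).
Proof. by exists [:: (1, f)]; rewrite big_seq1 scale1r /= ler01. Qed.

Lemma sos_sum (I : finType) (P : pred I) (F : I -> {poly R}) :
  (forall i, P i -> sos (F i)) -> sos (\sum_(i | P i) F i).
Proof. by move=> sosF; apply: big_ind => //; [exact: sos0 | exact: sosD]. Qed.

Variable theta : R.
Local Notation t := ('X - theta%:P).

Lemma sos_dvdp_XsubC (s : seq (R * {poly R})) : all (fun p => 0 <= p.1) s ->
  t %| \sum_(p <- s) p.1 *: p.2 ^+ 2 -> forall p, p \in s -> 0 < p.1 -> t %| p.2.
Proof.
move=> hs; rewrite dvdp_XsubCl /root horner_sum big_seq.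
rewrite psumr_eq0 => [/allP rootF p ps p0|p ps]; last first.
  by rewrite hornerZ horner_exp mulr_ge0 ?sqr_ge0 // (allP hs).
have := rootF p ps; rewrite ps /= hornerZ horner_exp mulf_eq0 gt_eqF //=.
by rewrite sqrf_eq0 dvdp_XsubCl.
Qed.

Lemma sos_dvdp_exp_XsubC r (s : seq (R * {poly R})) : all (fun p => 0 <= p.1) s ->
  t ^+ (2 * r).+1 %| \sum_(p <- s) p.1 *: p.2 ^+ 2 ->
  forall p, p \in s -> 0 < p.1 -> t ^+ r.+1 %| p.2.
Proof.
elim: r s => [|r IH] s hs hd.
  by rewrite expr1; apply: sos_dvdp_XsubC; rewrite // -(expr1 t).
have IHs : forall p, p \in s -> 0 < p.1 -> t ^+ r.+1 %| p.2.
  apply: IH hs (dvdp_trans _ hd); apply: dvdp_exp2l.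
  by rewrite ltnS leq_mul2l /= leqnSn.
pose q (p : R * {poly R}) := if 0 < p.1 then p.2 %/ t ^+ r.+1 else 0.
pose s' := [seq (p.1, q p) | p <- s].
have hs' : all (fun p => 0 <= p.1) s' by rewrite all_map.
have eq_s' : \sum_(p <- s) p.1 *: p.2 ^+ 2
    = t ^+ (2 * r.+1) * \sum_(p <- s') p.1 *: p.2 ^+ 2.
  rewrite big_map mulr_sumr; apply: eq_big_seq => p ps /=; rewrite /q.
  case: ifP => p0; last first.
    have -> : p.1 = 0 by apply/eqP; rewrite eq_le (allP hs p ps) leNgt p0.
    by rewrite !scale0r mulr0.
  rewrite -scalerAr -{1}(divpK (IHs p ps p0)) exprMn mulrC -exprM.
  by rewrite mulnC.
move: hd; rewrite eq_s' -addn1 exprD dvdp_mul2l ?expf_neq0 ?polyXsubC_eq0 //.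
rewrite expr1 => hd' p ps p0.
have := sos_dvdp_XsubC hs' hd' (map_f (fun p => (p.1, q p)) ps) p0.
rewrite /q p0 /= => dvd_q.
by rewrite -(divpK (IHs p ps p0)) exprS dvdp_mul.
Qed.

End SumsOfSquares.

Lemma dvdp_deriv_exp_XsubC (F : fieldType) (x : F) n (p : {poly F}) :
  ('X - x%:P) ^+ n %| p -> ('X - x%:P) ^+ n.-1 %| p^`().
Proof.
case: n => [|k] /= h; first by rewrite expr0 dvd1p.
rewrite -(divpK h) derivM deriv_exp derivXsubC mul1r /=.
apply: dvdp_add; first by apply: dvdp_mull; apply: dvdp_exp2l.
by rewrite -mulr_natr mulrA; apply: dvdp_mulr; apply: dvdp_mull.
Qed.

Definition wronskian (R : comNzRingType) (p q : {poly R}) := p * q^`() - q * p^`().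

Lemma dvdp_wronskian (F : fieldType) (x : F) k m (p q : {poly F}) :
  ('X - x%:P) ^+ k %| p -> ('X - x%:P) ^+ m %| q ->
  ('X - x%:P) ^+ (k + m).-1 %| wronskian p q.
Proof.
move=> dvd_p dvd_q; apply: dvdp_sub.
  apply: (@dvdp_trans _ (('X - x%:P) ^+ (k + m.-1))); first by apply: dvdp_exp2l; lia.
  by rewrite exprD dvdp_mul // dvdp_deriv_exp_XsubC.
apply: (@dvdp_trans _ (('X - x%:P) ^+ (m + k.-1))); first by apply: dvdp_exp2l; lia.
by rewrite exprD dvdp_mul // dvdp_deriv_exp_XsubC.
Qed.

Lemma mup_map_poly (F K : fieldType) (f : {rmorphism F -> K}) x (p : {poly F}) :
  p != 0 -> mup (f x) (map_poly f p) = mup x p.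
Proof.
move=> p0; have fp0 : map_poly f p != 0 by rewrite map_poly_eq0.
apply/eqP; rewrite eqn_leq mup_leq // mup_geq //.
by rewrite -!map_polyXsubC -!rmorphXn !dvdp_map -mup_leq // -mup_geq // !leqnn.
Qed.

Section Interlacing.
Variables (R : realFieldType) (V : finType) (E : {set {set V}}).
Variables (c : {set V} -> R) (a : V -> R).
Hypothesis simE : simple_graph E.
Hypothesis c_ge0 : forall e, 0 <= c e.

Local Notation P := (eta_poly E c a).

Lemma wronskian_eta_setU1 u (S : {set V}) : u \notin S ->
  wronskian (P S) (P (u |: S))
    = P S ^+ 2
      + \sum_(v in S | [set u; v] \in E) c [set u; v] *: wronskian (P (S :\ v)) (P S).
Proof.
move=> uS; rewrite /wronskian (eta_poly_setU1 c a simE uS).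
set A := \sum_(v in S | _) _.
have dA : A^`() = \sum_(v in S | [set u; v] \in E) c [set u; v] *: (P (S :\ v))^`().
  by rewrite /A linear_sum; apply: eq_bigr => v _; rewrite linearZ.
have -> : \sum_(v in S | [set u; v] \in E)
            c [set u; v] *: (P (S :\ v) * (P S)^`() - P S * (P (S :\ v))^`())
          = A * (P S)^`() - P S * A^`().
  rewrite dA mulr_suml mulr_sumr -sumrB; apply: eq_bigr => v _.
  by rewrite scalerBr scalerAl scalerAr.
rewrite derivB derivM derivXsubC mul1r; ring.
Qed.

Lemma wronskian_eta_sos (S : {set V}) u : u \in S ->
  sos (wronskian (P (S :\ u)) (P S) - P (S :\ u) ^+ 2).
Proof.
have [n] := ubnP #|S|; elim: n S u => // n IH S u; rewrite ltnS => leSn uS.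
have uSu : u \notin S :\ u by rewrite setD11.
have cardS := cardsD1 u S; rewrite uS /= in cardS.
rewrite -{2}(setD1K uS) wronskian_eta_setU1 // addrC addKr.
apply: sos_sum => v /andP[vS _]; apply: sosZ => //.
rewrite -(subrK (P (S :\ u :\ v) ^+ 2) (wronskian _ _)).
by apply: sosD; [apply: IH => //; lia | exact: sos_sqr].
Qed.

Lemma eta_poly_neq0 S : P S != 0.
Proof. by have [mon _] := eta_poly_monic_size c a simE S; apply: monic_neq0. Qed.

Variable theta : R.
Local Notation t := ('X - theta%:P).

Lemma mup_eta_le_deleted (S : {set V}) u : u \in S ->
  (mup theta (P S) <= (mup theta (P (S :\ u))).+1)%N.
Proof.
move=> uS; set m := mup theta (P S); set k := mup theta (P (S :\ u)).
rewrite leqNgt; apply/negP => km.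
have dvdS : t ^+ m %| P S by rewrite -mup_geq ?eta_poly_neq0.
have dvdSu : t ^+ k %| P (S :\ u) by rewrite -mup_geq ?eta_poly_neq0.
have [s [hs eqW]] := wronskian_eta_sos uS.
have eqW' : wronskian (P (S :\ u)) (P S)
    = \sum_(p <- (1, P (S :\ u)) :: s) p.1 *: p.2 ^+ 2.
  by rewrite big_cons -eqW scale1r /= addrC subrK.
have dvdW : t ^+ (2 * k).+1 %| \sum_(p <- (1, P (S :\ u)) :: s) p.1 *: p.2 ^+ 2.
  rewrite -eqW'; apply: dvdp_trans (dvdp_wronskian dvdSu dvdS).
  by apply: dvdp_exp2l; lia.
have hs' : all (fun p : R * {poly R} => 0 <= p.1) ((1, P (S :\ u)) :: s).
  by rewrite /= ler01 hs.
have := sos_dvdp_exp_XsubC hs' dvdW (mem_head _ _) ltr01.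
by rewrite /= -mup_geq ?eta_poly_neq0 // ltnn.
Qed.

Lemma mup_deleted_le_eta (S : {set V}) u : u \in S ->
  (mup theta (P (S :\ u)) <= (mup theta (P S)).+1)%N.
Proof.
move=> uS; set k := mup theta (P (S :\ u)).
suff : t ^+ k.-1 %| P S by rewrite -mup_geq ?eta_poly_neq0 //; lia.
have dvdSu : t ^+ k.-1 %| P (S :\ u) by rewrite -mup_geq ?eta_poly_neq0 // leq_pred.
have uSu : u \notin S :\ u by rewrite setD11.
rewrite -{1}(setD1K uS) (eta_poly_setU1 c a simE uSu).
apply: dvdp_sub; first exact: dvdp_mull.
apply: (big_ind (fun q => t ^+ k.-1 %| q)) => [|p q|v /andP[vS _]].
- exact: dvdp0.
- exact: dvdp_add.
rewrite -mul_polyC dvdp_mull // -mup_geq ?eta_poly_neq0 //.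
by have := mup_eta_le_deleted vS; rewrite -/k; lia.
Qed.

End Interlacing.

Lemma eta_w_map (R : realType) (V : finType) (E : {set {set V}})
  (w : {set V} -> R[i]) (w1 : V -> R) (S : {set V}) :
  eta_w E w w1 S = map_poly (real_complex R)
     (eta_poly E (fun e => complex.Re (w e) ^+ 2 + complex.Im (w e) ^+ 2) w1 S).
Proof.
rewrite /eta_w /eta_poly rmorph_sum; apply: eq_bigr => T _.
rewrite /= map_polyZ /mu_w /matching_poly rmorph_sum /eta_coef; congr (_ *: _).
  by rewrite rmorphM rmorphXn rmorphN1 rmorph_prod.
apply: eq_bigr => M _; rewrite /= map_polyZ map_polyXn; congr (_ *: _).
rewrite rmorphM rmorphXn rmorphN1 rmorph_prod; congr (_ * _).
by apply: eq_bigr => e _; rewrite -add_Re2_Im2.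
Qed.

Theorem lemma4p2 (R : realType) (V : finType) (E : {set {set V}})
  (w : {set V} -> R[i]) (w1 : V -> R) (u : V) (theta : R) :
  simple_graph E ->
  (forall e, e \in E -> w e != 0) ->
  (mult E w w1 theta [set: V] - 1 <= mult E w w1 theta ([set: V] :\ u)
     <= mult E w w1 theta [set: V] + 1)%N.
Proof.
move=> simE _.
pose c e := complex.Re (w e) ^+ 2 + complex.Im (w e) ^+ 2.
have c_ge0 e : 0 <= c e by rewrite addr_ge0 ?sqr_ge0.
have uV : u \in [set: V] by rewrite inE.
rewrite /mult !eta_w_map !mup_map_poly ?(eta_poly_neq0 c w1 simE) //.
rewrite leq_subLR add1n addn1.
by rewrite (mup_eta_le_deleted w1 simE c_ge0 theta uV)
           (mup_deleted_le_eta w1 simE c_ge0 theta uV).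
Qed.
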